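(* Suppose $\vec S_n(t),\bar{\vec S}_n(t)\in\mathbb{C}^m$ and $v_n(t)$ ($n\in\mathbb{Z}$) satisfy the discrete multicomponent Yajima--Oikawa system \begin{align*} \mathrm{i}\,\vec S_{n,t}&=v_n(\vec S_{n+1}+\vec S_{n-1})-c\,\vec S_n,\\ \mathrm{i}\,\bar{\vec S}_{n,t}&=-v_n(\bar{\vec S}_{n+1}+\bar{\vec S}_{n-1})+c\,\bar{\vec S}_n,\\ v_{n,t}&=\tfrac12 v_n\,\Delta_n^+\big(\langle\vec S_n,\bar{\vec S}_{n-1}\rangle+\langle\vec S_{n-1},\bar{\vec S}_n\rangle\big), \end{align*} with $c$ a constant (and with decay at $n\to-\infty$ sufficient for the sums below to converge). Then the overdetermined linear equations for a scalar $\psi_n$, \[ v_n(\psi_{n+1}+\psi_{n-1})=\lambda\psi_n-\frac{\mathrm{i}}{2}\sum_{j=-\infty}^{n-1}\Big[\langle\vec S_n,\bar{\vec S}_j\rangle+(-1)^{n-j-1}\langle\vec S_j,\bar{\vec S}_n\rangle\Big](\psi_{j+1}+\psi_{j-1}), \] and \[ \mathrm{i}\,\psi_{n,t}=v_n(\psi_{n+1}+\psi_{n-1})-c\,\psi_n, \] are compatible, where $\lambda$ is a constant spectral parameter. (The converse implication does not hold.)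
   Context: $\langle\vec a,\vec b\rangle=\sum_i a^{(i)}b^{(i)}$ is the bilinear scalar product; $\Delta_n^+f_n:=f_{n+1}-f_n$; $\bar{\vec S}_n$ is an independent vector variable. ''Compatible'' means that differentiating the first (spatial) equation in $t$ and using the second equation and the first equation to eliminate time derivatives of $\psi$ and $\lambda$ yields an identity for arbitrary $\psi$. *)

From Stdlib Require Import Reals ZArith.
Open Scope R_scope.

Record Cplx := mkC { Cre : R; Cim : R }.
Definition C0 : Cplx := mkC 0 0.
Definition C1 : Cplx := mkC 1 0.
Definition Ci : Cplx := mkC 0 1.
Definition RC (r : R) : Cplx := mkC r 0.
Definition Cadd (z w : Cplx) : Cplx := mkC (Cre z + Cre w) (Cim z + Cim w).
Definition Copp (z : Cplx) : Cplx := mkC (- Cre z) (- Cim z).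
Definition Csub (z w : Cplx) : Cplx := Cadd z (Copp w).
Definition Cmul (z w : Cplx) : Cplx :=
  mkC (Cre z * Cre w - Cim z * Cim w) (Cre z * Cim w + Cim z * Cre w).
(* an (equivalent) norm |Re z| + |Im z|, used only for decay conditions *)
Definition Cabs1 (z : Cplx) : R := Rabs (Cre z) + Rabs (Cim z).

Fixpoint Csum_nat (f : nat -> Cplx) (N : nat) : Cplx :=
  match N with O => C0 | S k => Cadd (Csum_nat f k) (f k) end.
Fixpoint Rsum_nat (f : nat -> R) (N : nat) : R :=
  match N with O => 0 | S k => Rsum_nat f k + f k end.

(** vectors of C^m: functions nat -> C, only the components i < m matter *)
Definition cvec := nat -> Cplx.
Definition bdot (m : nat) (a b : cvec) : Cplx :=
  Csum_nat (fun i => Cmul (a i) (b i)) m.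

Definition sgnZ (k : Z) : Cplx := if Z.even k then C1 else Copp C1.

(** lsum f n l : the series sum_{j=-oo}^{n-1} f j converges to l
    (limit of the partial sums sum_{j=n-N}^{n-1} f j as N -> oo) *)
Definition lsum (f : Z -> Cplx) (n : Z) (l : Cplx) : Prop :=
  let p := fun N => Csum_nat (fun k => f (n - 1 - Z.of_nat k)%Z) N in
  Un_cv (fun N => Cre (p N)) (Cre l) /\ Un_cv (fun N => Cim (p N)) (Cim l).

Definition left_summable (g : Z -> R) : Prop :=
  exists B : R, forall N : nat,
    Rsum_nat (fun k => Rabs (g (- Z.of_nat k)%Z)) N <= B.

Definition kerYO (m : nat) (S Sb : Z -> cvec) (n j : Z) : Cplx :=
  Cadd (bdot m (S n) (Sb j)) (Cmul (sgnZ (n - j - 1)%Z) (bdot m (S j) (Sb n))).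

(** its formal time derivative (product rule), given the derivatives St, Sbt *)
Definition kerYO_dot (m : nat) (S Sb St Sbt : Z -> cvec) (n j : Z) : Cplx :=
  Cadd (Cadd (bdot m (St n) (Sb j)) (bdot m (S n) (Sbt j)))
       (Cmul (sgnZ (n - j - 1)%Z)
             (Cadd (bdot m (St j) (Sb n)) (bdot m (S j) (Sbt n)))).

(** P_n = <S_n, Sb_{n-1}> + <S_{n-1}, Sb_n>, so that v_t = 1/2 v Delta^+ P *)
Definition PYO (m : nat) (S Sb : Z -> cvec) (n : Z) : Cplx :=
  Cadd (bdot m (S n) (Sb (n - 1)%Z)) (bdot m (S (n - 1)%Z) (Sb n)).

Definition wYO (m : nat) (S Sb : Z -> cvec) (j : Z) : R :=
  Rsum_nat (fun i => Cabs1 (S j i) + Cabs1 (Sb j i)) m.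

Definition decayYO (m : nat) (S Sb : Z -> cvec) (v psi : Z -> Cplx) (j : Z) : R :=
  wYO m S Sb j
  * (1 + Cabs1 (v (j - 1)%Z) + Cabs1 (v j) + Cabs1 (v (j + 1)%Z))
  * (Cabs1 (psi (j - 2)%Z) + Cabs1 (psi (j - 1)%Z) + Cabs1 (psi j)
     + Cabs1 (psi (j + 1)%Z) + Cabs1 (psi (j + 2)%Z)).

(* Differentiate the summand K_{n,j}(psi_{j+1}+psi_{j-1}) of the spatial equation in t and
   substitute the evolution equations.  Writing f_{a,j} = K_{a,j}(psi_{j+1}+psi_{j-1}) and
   g_j = v_j(psi_{j+1}+psi_{j-1}), the result is -i times
     v_n (f_{n+1,j} + f_{n-1,j}) - c f_{n,j} + (B_j - B_{j-1}),
   where B_j = K_{n,j} g_{j+1} - K_{n,j+1} g_j is the Casoratian of K_{n,.} and g.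
   Summed over j <= n-1, the B-part telescopes to B_{n-1} because the decay hypothesis
   makes B_j vanish at -oo, and the f-parts are the spatial sums at n+1, n, n-1 up to the
   single term f_{n+1,n} (the term f_{n-1,n-1} vanishes as K_{a,a} = 0).  Eliminating
   these sums with the spatial equation itself leaves a polynomial identity. *)

From Pilot Require Import Defs.
From Stdlib Require Import Reals ZArith.
Open Scope R_scope.
From Stdlib Require Import Lra Lia.
Import Defs.

Lemma Cext (z w : Cplx) : Cre z = Cre w -> Cim z = Cim w -> z = w.
Proof. destruct z, w; simpl; intros -> ->; reflexivity. Qed.

Lemma Cring : ring_theory C0 C1 Cadd Cmul Csub Copp (@eq Cplx).
Proof.
  constructor; intros; apply Cext; unfold Cadd, Cmul, Csub, Copp, C0, C1; simpl; ring.
Qed.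
Add Ring Cring : Cring.

Lemma Ci_sqr : Cmul Ci Ci = Copp C1.
Proof. apply Cext; unfold Cmul, Ci, Copp, C1; simpl; ring. Qed.

Lemma RC_half_twice : Cmul (RC (/ 2)) (RC 2) = C1.
Proof. apply Cext; unfold Cmul, RC, C1; simpl; field. Qed.

Lemma Cmul_Ci_solve (z y : Cplx) : Cmul Ci z = y -> z = Cmul (Copp Ci) y.
Proof. intros <-. apply Cext; unfold Cmul, Ci, Copp; simpl; ring. Qed.

Lemma Cabs1_ge0 (z : Cplx) : 0 <= Cabs1 z.
Proof. unfold Cabs1; pose proof (Rabs_pos (Cre z)); pose proof (Rabs_pos (Cim z)); lra. Qed.

Lemma Cabs1_add (z w : Cplx) : Cabs1 (Cadd z w) <= Cabs1 z + Cabs1 w.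
Proof.
  unfold Cabs1, Cadd; simpl.
  pose proof (Rabs_triang (Cre z) (Cre w)); pose proof (Rabs_triang (Cim z) (Cim w)); lra.
Qed.

Lemma Cabs1_sub (z w : Cplx) : Cabs1 (Csub z w) <= Cabs1 z + Cabs1 w.
Proof.
  replace (Cabs1 w) with (Cabs1 (Copp w)) by (unfold Cabs1; simpl; rewrite !Rabs_Ropp; auto).
  apply Cabs1_add.
Qed.

Lemma Cabs1_mul (z w : Cplx) : Cabs1 (Cmul z w) <= Cabs1 z * Cabs1 w.
Proof.
  destruct z as [a b], w as [c d]; unfold Cabs1, Cmul; simpl.
  assert (Rabs (a * c - b * d) <= Rabs a * Rabs c + Rabs b * Rabs d).
  { unfold Rminus; eapply Rle_trans; [apply Rabs_triang|]; rewrite Rabs_Ropp, !Rabs_mult; lra. }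
  assert (Rabs (a * d + b * c) <= Rabs a * Rabs d + Rabs b * Rabs c).
  { eapply Rle_trans; [apply Rabs_triang|]; rewrite !Rabs_mult; lra. }
  nra.
Qed.

Lemma sgnZ_succ (k : Z) : sgnZ (k + 1) = Copp (sgnZ k).
Proof.
  unfold sgnZ; rewrite Z.even_add; destruct (Z.even k); apply Cext; simpl; ring.
Qed.

Lemma sgnZ_pred (k : Z) : sgnZ (k - 1) = Copp (sgnZ k).
Proof.
  rewrite <- (Z.sub_add 1 k) at 2; rewrite sgnZ_succ.
  apply Cext; simpl; ring.
Qed.

Lemma Cabs1_sgnZ_mul (k : Z) (z : Cplx) : Cabs1 (Cmul (sgnZ k) z) = Cabs1 z.
Proof.
  unfold sgnZ; destruct (Z.even k).
  - replace (Cmul C1 z) with z by ring; reflexivity.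
  - replace (Cmul (Copp C1) z) with (Copp z) by ring.
    unfold Cabs1; simpl; rewrite !Rabs_Ropp; reflexivity.
Qed.

Definition Ccv (u : nat -> Cplx) (l : Cplx) : Prop :=
  Un_cv (fun N => Cre (u N)) (Cre l) /\ Un_cv (fun N => Cim (u N)) (Cim l).

Lemma Ccv_eq (u w : nat -> Cplx) (a b : Cplx) :
  (forall N, u N = w N) -> a = b -> Ccv u a -> Ccv w b.
Proof.
  intros E <- [Hre Him]; split; eapply Un_cv_ext; eauto; intros N; simpl; rewrite E; reflexivity.
Qed.

Lemma Un_cv_const (a : R) : Un_cv (fun _ => a) a.
Proof.
  intros eps Heps; exists 0%nat; intros; unfold R_dist.
  rewrite Rminus_diag, Rabs_R0; exact Heps.
Qed.

Lemma Ccv_const (a : Cplx) : Ccv (fun _ => a) a.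
Proof. split; apply Un_cv_const. Qed.

Lemma Ccv_add (u w : nat -> Cplx) (a b : Cplx) :
  Ccv u a -> Ccv w b -> Ccv (fun N => Cadd (u N) (w N)) (Cadd a b).
Proof. intros [H1 H2] [H3 H4]; split; apply CV_plus; assumption. Qed.

Lemma Ccv_scal (z : Cplx) (u : nat -> Cplx) (a : Cplx) :
  Ccv u a -> Ccv (fun N => Cmul z (u N)) (Cmul z a).
Proof.
  intros [H1 H2]; split; simpl;
    [apply CV_minus | apply CV_plus]; apply CV_mult; auto; apply Un_cv_const.
Qed.

Lemma Ccv_shift (u : nat -> Cplx) (a : Cplx) :
  Ccv (fun N => u (S N)) a <-> Ccv u a.
Proof.
  split; intros [H1 H2]; split.
  - apply (CV_shift _ 1); eapply Un_cv_ext; [|exact H1]; intros N; rewrite Nat.add_1_r; reflexivity.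
  - apply (CV_shift _ 1); eapply Un_cv_ext; [|exact H2]; intros N; rewrite Nat.add_1_r; reflexivity.
  - eapply Un_cv_ext; [|exact (CV_shift' _ 1 _ H1)].
    intros N; cbv beta; rewrite Nat.add_1_r; reflexivity.
  - eapply Un_cv_ext; [|exact (CV_shift' _ 1 _ H2)].
    intros N; cbv beta; rewrite Nat.add_1_r; reflexivity.
Qed.

Lemma Ccv_dominated (u : nat -> Cplx) (b : nat -> R) :
  (forall N, Cabs1 (u N) <= b N) -> Un_cv b 0 -> Ccv u C0.
Proof.
  intros Hb H; split; intros eps Heps; destruct (H eps Heps) as [N HN];
    exists N; intros k Hk; specialize (HN k Hk); specialize (Hb k);
    unfold R_dist, Cabs1 in *; simpl; rewrite Rminus_0_r in *;
    pose proof (Rabs_pos (Cre (u k))); pose proof (Rabs_pos (Cim (u k)));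
    pose proof (Rle_abs (b k)); lra.
Qed.

Lemma Csum_ext (f g : nat -> Cplx) (N : nat) :
  (forall k, f k = g k) -> Csum_nat f N = Csum_nat g N.
Proof. intros E; induction N; simpl; [|rewrite IHN, E]; reflexivity. Qed.

Lemma Csum_add (f g : nat -> Cplx) (N : nat) :
  Csum_nat (fun k => Cadd (f k) (g k)) N = Cadd (Csum_nat f N) (Csum_nat g N).
Proof. induction N; simpl; [|rewrite IHN]; ring. Qed.

Lemma Csum_scal (z : Cplx) (f : nat -> Cplx) (N : nat) :
  Csum_nat (fun k => Cmul z (f k)) N = Cmul z (Csum_nat f N).
Proof. induction N; simpl; [|rewrite IHN]; ring. Qed.

Lemma Csum_succ_l (f : nat -> Cplx) (N : nat) :
  Csum_nat f (S N) = Cadd (f O) (Csum_nat (fun k => f (S k)) N).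
Proof. induction N; [simpl; ring|]. simpl in *; rewrite IHN; ring. Qed.

Lemma Csum_telescope (T : nat -> Cplx) (N : nat) :
  Csum_nat (fun k => Csub (T k) (T (S k))) N = Csub (T O) (T N).
Proof. induction N; simpl; [|rewrite IHN]; ring. Qed.

Lemma lsum_eq (f g : Z -> Cplx) (n : Z) (a b : Cplx) :
  (forall j, f j = g j) -> a = b -> lsum f n a -> lsum g n b.
Proof. intros E; apply Ccv_eq; intros N; apply Csum_ext; intros k; apply E. Qed.

Lemma lsum_add (f g : Z -> Cplx) (n : Z) (a b : Cplx) :
  lsum f n a -> lsum g n b -> lsum (fun j => Cadd (f j) (g j)) n (Cadd a b).
Proof.
  intros Hf Hg; eapply Ccv_eq; [|reflexivity|exact (Ccv_add _ _ _ _ Hf Hg)].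
  intros N; symmetry; apply Csum_add.
Qed.

Lemma lsum_scal (z : Cplx) (f : Z -> Cplx) (n : Z) (a : Cplx) :
  lsum f n a -> lsum (fun j => Cmul z (f j)) n (Cmul z a).
Proof.
  intros Hf; eapply Ccv_eq; [|reflexivity|exact (Ccv_scal z _ _ Hf)].
  intros N; symmetry; apply Csum_scal.
Qed.

Lemma lsum_pred (f : Z -> Cplx) (n : Z) (l : Cplx) :
  lsum f (n + 1) l -> lsum f n (Csub l (f n)).
Proof.
  intros H; apply Ccv_shift in H.
  eapply Ccv_eq; [|reflexivity|exact (Ccv_add _ _ _ _ H (Ccv_const (Copp (f n))))].
  intros N; cbv beta; rewrite Csum_succ_l.
  replace (n + 1 - 1 - Z.of_nat 0)%Z with n by lia.
  rewrite (Csum_ext _ (fun k => f (n - 1 - Z.of_nat k)%Z)) by (intros k; f_equal; lia).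
  ring.
Qed.

Lemma lsum_succ (f : Z -> Cplx) (n : Z) (l : Cplx) :
  lsum f (n - 1) l -> lsum f n (Cadd l (f (n - 1)%Z)).
Proof.
  intros H; apply Ccv_shift.
  eapply Ccv_eq; [|reflexivity|exact (Ccv_add _ _ _ _ H (Ccv_const (f (n - 1)%Z)))].
  intros N; cbv beta; rewrite Csum_succ_l.
  replace (n - 1 - Z.of_nat 0)%Z with (n - 1)%Z by lia.
  rewrite (Csum_ext (fun k => f (n - 1 - Z.of_nat (S k))%Z)
                    (fun k => f (n - 1 - 1 - Z.of_nat k)%Z)) by (intros k; f_equal; lia).
  ring.
Qed.

Lemma lsum_telescope (T : Z -> Cplx) (n : Z) :
  Ccv (fun N => T (n - 1 - Z.of_nat N)%Z) C0 ->
  lsum (fun j => Csub (T j) (T (j - 1)%Z)) n (T (n - 1)%Z).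
Proof.
  intros H.
  eapply Ccv_eq;
    [| |exact (Ccv_add _ _ _ _ (Ccv_const (T (n - 1)%Z)) (Ccv_scal (Copp C1) _ _ H))];
    [|ring].
  intros N; cbv beta.
  rewrite (Csum_ext _ (fun k => Csub (T (n - 1 - Z.of_nat k)%Z) (T (n - 1 - Z.of_nat (S k))%Z)))
    by (intros k; f_equal; f_equal; lia).
  rewrite (Csum_telescope (fun k => T (n - 1 - Z.of_nat k)%Z)); simpl; rewrite Z.sub_0_r; ring.
Qed.

Lemma Rsum_nat_ge0 (f : nat -> R) (N : nat) : (forall k, 0 <= f k) -> 0 <= Rsum_nat f N.
Proof. intros H; induction N; simpl; [lra|]; specialize (H N); lra. Qed.

Lemma Rsum_nat_le (f g : nat -> R) (N : nat) :
  (forall k, f k <= g k) -> Rsum_nat f N <= Rsum_nat g N.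
Proof. intros H; induction N; simpl; [lra|]; specialize (H N); lra. Qed.

Lemma left_summable_cv0 (g : Z -> R) (a : Z) :
  left_summable g -> Un_cv (fun N => g (a - Z.of_nat N)%Z) 0.
Proof.
  intros [B HB].
  set (s := Rsum_nat (fun k => Rabs (g (- Z.of_nat k)%Z))).
  assert (Hs : Un_growing s)
    by (intros N; unfold s; simpl; pose proof (Rabs_pos (g (- Z.of_nat N)%Z)); lra).
  destruct (growing_cv s Hs) as [l Hl]; [exists B; intros x [N ->]; apply HB|].
  assert (Hterm : Un_cv (fun k => Rabs (g (- Z.of_nat k)%Z)) 0).
  { replace 0 with (l - l) by ring.
    eapply Un_cv_ext; [|exact (CV_minus _ _ _ _ (CV_shift' _ 1 _ Hl) Hl)].
    intros N; cbv beta; rewrite Nat.add_1_r; unfold s; simpl; ring. }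
  intros eps Heps; destruct (Hterm eps Heps) as [K HK].
  exists (K + Z.to_nat a)%nat; intros N HN.
  specialize (HK (Z.to_nat (Z.of_nat N - a)) ltac:(lia)).
  unfold R_dist in *; rewrite Rminus_0_r, Rabs_Rabsolu in HK; rewrite Rminus_0_r.
  replace (a - Z.of_nat N)%Z with (- Z.of_nat (Z.to_nat (Z.of_nat N - a)))%Z by lia.
  exact HK.
Qed.

Lemma bdot_comm (m : nat) (a b : cvec) : bdot m a b = bdot m b a.
Proof. induction m; [reflexivity|]; unfold bdot in *; simpl; rewrite IHm; ring. Qed.

Lemma bdot_ext_l (m : nat) (a b X : cvec) :
  (forall i, (i < m)%nat -> a i = b i) -> bdot m a X = bdot m b X.
Proof.
  intros E; induction m; [reflexivity|]; unfold bdot in *; simpl.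
  rewrite IHm by (intros; apply E; lia); rewrite E by lia; reflexivity.
Qed.

Lemma bdot_scal_l (m : nat) (z : Cplx) (a X : cvec) :
  Cmul z (bdot m a X) = bdot m (fun i => Cmul z (a i)) X.
Proof. unfold bdot; rewrite <- Csum_scal; apply Csum_ext; intros; ring. Qed.

Lemma Cabs1_bdot_le (m : nat) (a b : cvec) :
  Cabs1 (bdot m a b)
  <= Rsum_nat (fun i => Cabs1 (a i)) m * Rsum_nat (fun i => Cabs1 (b i)) m.
Proof.
  induction m; [unfold bdot, Cabs1; simpl; rewrite Rabs_R0; lra|].
  unfold bdot in *; simpl.
  pose proof (Cabs1_add (Csum_nat (fun i => Cmul (a i) (b i)) m) (Cmul (a m) (b m))).
  pose proof (Cabs1_mul (a m) (b m)).
  pose proof (Rsum_nat_ge0 (fun i => Cabs1 (a i)) m (fun i => Cabs1_ge0 _)).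
  pose proof (Rsum_nat_ge0 (fun i => Cabs1 (b i)) m (fun i => Cabs1_ge0 _)).
  pose proof (Cabs1_ge0 (a m)); pose proof (Cabs1_ge0 (b m)).
  nra.
Qed.

Definition shift_sum (u : Z -> Cplx) (n : Z) : Cplx := Cadd (u (n + 1)%Z) (u (n - 1)%Z).

Definition lattice_op (v : Z -> Cplx) (c : Cplx) (u : Z -> Cplx) (n : Z) : Cplx :=
  Csub (Cmul (v n) (shift_sum u n)) (Cmul c (u n)).

Lemma bdot_lattice_op_l (m : nat) (v : Z -> Cplx) (c : Cplx) (T : Z -> cvec) (X : cvec)
  (n : Z) :
  bdot m (fun i => lattice_op v c (fun k => T k i) n) X
  = lattice_op v c (fun k => bdot m (T k) X) n.
Proof.
  unfold lattice_op, shift_sum; induction m; unfold bdot in *; simpl; [ring|].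
  rewrite IHm; ring.
Qed.

Definition casoratian (a b : Z -> Cplx) (j : Z) : Cplx :=
  Csub (Cmul (a j) (b (j + 1)%Z)) (Cmul (a (j + 1)%Z) (b j)).

Lemma Cabs1_casoratian_le (a b : Z -> Cplx) (j : Z) :
  Cabs1 (casoratian a b j)
  <= Cabs1 (a j) * Cabs1 (b (j + 1)%Z) + Cabs1 (a (j + 1)%Z) * Cabs1 (b j).
Proof.
  eapply Rle_trans; [apply Cabs1_sub|].
  pose proof (Cabs1_mul (a j) (b (j + 1)%Z)); pose proof (Cabs1_mul (a (j + 1)%Z) (b j)); lra.
Qed.

Lemma kerYO_diag (m : nat) (S Sb : Z -> cvec) (a : Z) : kerYO m S Sb a a = C0.
Proof. unfold kerYO; replace (a - a - 1)%Z with (-1)%Z by lia; cbn; ring. Qed.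

Lemma Cmul_half_Ci_solve (l a b : Cplx) :
  a = Csub b (Cmul (Cmul Ci (RC (/ 2))) l) -> l = Cmul (Cmul (Copp Ci) (RC 2)) (Csub b a).
Proof. intros ->; apply Cext; unfold Csub, Cadd, Cmul, Ci, Copp, RC; simpl; field. Qed.

Section YajimaOikawa.

Variables (m : nat) (c : Cplx) (S Sb St Sbt : Z -> cvec) (v psi psit : Z -> Cplx).

Hypothesis HS : forall (n : Z) (i : nat), (i < m)%nat ->
  Cmul Ci (St n i) =
  Csub (Cmul (v n) (Cadd (S (n + 1)%Z i) (S (n - 1)%Z i))) (Cmul c (S n i)).
Hypothesis HSb : forall (n : Z) (i : nat), (i < m)%nat ->
  Cmul Ci (Sbt n i) =
  Cadd (Copp (Cmul (v n) (Cadd (Sb (n + 1)%Z i) (Sb (n - 1)%Z i)))) (Cmul c (Sb n i)).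
Hypothesis Hpsit : forall n : Z,
  Cmul Ci (psit n) =
  Csub (Cmul (v n) (Cadd (psi (n + 1)%Z) (psi (n - 1)%Z))) (Cmul c (psi n)).

Definition spat_lhs (j : Z) : Cplx := Cmul (v j) (shift_sum psi j).
Definition spat_term (a j : Z) : Cplx := Cmul (kerYO m S Sb a j) (shift_sum psi j).
Definition spat_term_dot (n j : Z) : Cplx :=
  Cadd (Cmul (kerYO_dot m S Sb St Sbt n j) (shift_sum psi j))
       (Cmul (kerYO m S Sb n j) (shift_sum psit j)).
Definition boundary (n : Z) : Z -> Cplx := casoratian (kerYO m S Sb n) spat_lhs.

Lemma psit_eq (j : Z) : psit j = Cmul (Copp Ci) (lattice_op v c psi j).
Proof. exact (Cmul_Ci_solve _ _ (Hpsit j)). Qed.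

Lemma bdot_St (a : Z) (X : cvec) :
  bdot m (St a) X = Cmul (Copp Ci) (lattice_op v c (fun k => bdot m (S k) X) a).
Proof.
  apply Cmul_Ci_solve; rewrite bdot_scal_l, <- bdot_lattice_op_l.
  apply bdot_ext_l; exact (HS a).
Qed.

Lemma bdot_Sbt (b : Z) (X : cvec) :
  bdot m X (Sbt b) = Cmul Ci (lattice_op v c (fun k => bdot m X (Sb k)) b).
Proof.
  assert (H : Cmul Ci (bdot m (Sbt b) X)
              = Cmul (Copp C1) (lattice_op v c (fun k => bdot m (Sb k) X) b)).
  { rewrite bdot_scal_l, <- bdot_lattice_op_l, bdot_scal_l.
    apply bdot_ext_l; intros i Hi; rewrite HSb by exact Hi; unfold lattice_op, shift_sum; ring. }
  rewrite bdot_comm, (Cmul_Ci_solve _ _ H); unfold lattice_op, shift_sum.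
  rewrite !(bdot_comm m X); ring.
Qed.

Lemma spat_term_dot_telescoping (n j : Z) :
  spat_term_dot n j =
  Cmul (Copp Ci)
    (Cadd (Cadd (Cmul (v n) (Cadd (spat_term (n + 1) j) (spat_term (n - 1) j)))
                (Cmul (Copp c) (spat_term n j)))
          (Csub (boundary n j) (boundary n (j - 1)))).
Proof.
  unfold spat_term_dot, kerYO_dot, shift_sum; rewrite !bdot_St, !bdot_Sbt, !psit_eq.
  unfold spat_term, boundary, casoratian, spat_lhs, kerYO, lattice_op, shift_sum.
  replace (j - 1 + 1)%Z with j by ring.
  replace (n + 1 - j - 1)%Z with (n - j - 1 + 1)%Z by ring.
  replace (n - (j - 1) - 1)%Z with (n - j - 1 + 1)%Z by ring.
  replace (n - 1 - j - 1)%Z with (n - j - 1 - 1)%Z by ring.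
  replace (n - (j + 1) - 1)%Z with (n - j - 1 - 1)%Z by ring.
  rewrite (sgnZ_succ (n - j - 1)), (sgnZ_pred (n - j - 1)); ring [Ci_sqr].
Qed.

Lemma wYO_ge0 (j : Z) : 0 <= wYO m S Sb j.
Proof.
  apply Rsum_nat_ge0; intros i.
  pose proof (Cabs1_ge0 (S j i)); pose proof (Cabs1_ge0 (Sb j i)); lra.
Qed.

Lemma Cabs1_Sdot_le (a b : Z) :
  Cabs1 (bdot m (S a) (Sb b)) <= wYO m S Sb a * wYO m S Sb b.
Proof.
  eapply Rle_trans; [apply Cabs1_bdot_le|]; unfold wYO.
  apply Rmult_le_compat; try (apply Rsum_nat_ge0; intros; apply Cabs1_ge0);
    apply Rsum_nat_le; intros i;
    [pose proof (Cabs1_ge0 (Sb a i)) | pose proof (Cabs1_ge0 (S b i))]; lra.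
Qed.

Lemma Cabs1_kerYO_le (n j : Z) :
  Cabs1 (kerYO m S Sb n j) <= 2 * wYO m S Sb n * wYO m S Sb j.
Proof.
  unfold kerYO; eapply Rle_trans; [apply Cabs1_add|]; rewrite Cabs1_sgnZ_mul.
  pose proof (Cabs1_Sdot_le n j); pose proof (Cabs1_Sdot_le j n); lra.
Qed.

Lemma Cabs1_spat_lhs_le (j k : Z) :
  (k = j + 1 \/ k = j - 1)%Z ->
  wYO m S Sb j * Cabs1 (spat_lhs k) <= decayYO m S Sb v psi j.
Proof.
  intros Hk; unfold decayYO; rewrite Rmult_assoc; apply Rmult_le_compat_l; [apply wYO_ge0|].
  unfold spat_lhs, shift_sum; eapply Rle_trans; [apply Cabs1_mul|].
  pose proof (Cabs1_add (psi (k + 1)%Z) (psi (k - 1)%Z)).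
  pose proof (Cabs1_ge0 (Cadd (psi (k + 1)%Z) (psi (k - 1)%Z))).
  assert (Hv : Cabs1 (v k) <= Cabs1 (v (j - 1)%Z) + Cabs1 (v j) + Cabs1 (v (j + 1)%Z)).
  { pose proof (Cabs1_ge0 (v (j - 1)%Z)); pose proof (Cabs1_ge0 (v j));
    pose proof (Cabs1_ge0 (v (j + 1)%Z)).
    destruct Hk as [-> | ->]; lra. }
  assert (Hpsi : Cabs1 (psi (k + 1)%Z) + Cabs1 (psi (k - 1)%Z)
                 <= Cabs1 (psi (j - 2)%Z) + Cabs1 (psi (j - 1)%Z) + Cabs1 (psi j)
                    + Cabs1 (psi (j + 1)%Z) + Cabs1 (psi (j + 2)%Z)).
  { pose proof (Cabs1_ge0 (psi (j - 2)%Z)); pose proof (Cabs1_ge0 (psi (j - 1)%Z));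
    pose proof (Cabs1_ge0 (psi j)); pose proof (Cabs1_ge0 (psi (j + 1)%Z));
    pose proof (Cabs1_ge0 (psi (j + 2)%Z)).
    destruct Hk as [-> | ->].
    - replace (j + 1 + 1)%Z with (j + 2)%Z by ring; replace (j + 1 - 1)%Z with j by ring; lra.
    - replace (j - 1 + 1)%Z with j by ring; replace (j - 1 - 1)%Z with (j - 2)%Z by ring; lra. }
  apply Rmult_le_compat; [apply Cabs1_ge0 | apply Cabs1_ge0 | lra | lra].
Qed.

Lemma Cabs1_boundary_le (n j : Z) :
  Cabs1 (boundary n j)
  <= 2 * wYO m S Sb n * (decayYO m S Sb v psi j + decayYO m S Sb v psi (j + 1)%Z).
Proof.
  eapply Rle_trans; [apply Cabs1_casoratian_le|].
  pose proof (Cabs1_kerYO_le n j); pose proof (Cabs1_kerYO_le n (j + 1)).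
  pose proof (Cabs1_spat_lhs_le j (j + 1) ltac:(lia)).
  pose proof (Cabs1_spat_lhs_le (j + 1) j ltac:(lia)).
  pose proof (Cabs1_ge0 (spat_lhs j)); pose proof (Cabs1_ge0 (spat_lhs (j + 1)%Z)).
  pose proof (wYO_ge0 n).
  nra.
Qed.

Lemma boundary_cv0 (Hdec : left_summable (decayYO m S Sb v psi)) (n : Z) :
  Ccv (fun N => boundary n (n - 1 - Z.of_nat N)%Z) C0.
Proof.
  apply (Ccv_dominated _ (fun N => 2 * wYO m S Sb n *
           (decayYO m S Sb v psi (n - 1 - Z.of_nat N)%Z
            + decayYO m S Sb v psi (n - Z.of_nat N)%Z))).
  - intros N; replace (n - Z.of_nat N)%Z with (n - 1 - Z.of_nat N + 1)%Z by ring.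
    apply Cabs1_boundary_le.
  - replace 0 with (2 * wYO m S Sb n * (0 + 0)) by ring.
    apply CV_mult; [apply Un_cv_const|].
    apply CV_plus; apply left_summable_cv0; exact Hdec.
Qed.

Definition spat_sum_dot (n : Z) (l1 l0 lm : Cplx) : Cplx :=
  Cmul (Copp Ci)
    (Cadd (Cadd (Cmul (v n) (Cadd (Csub l1 (spat_term (n + 1) n)) lm)) (Cmul (Copp c) l0))
          (boundary n (n - 1))).

Lemma lsum_spat_term_dot (Hdec : left_summable (decayYO m S Sb v psi))
  (n : Z) (l1 l0 lm : Cplx) :
  lsum (spat_term (n + 1)) (n + 1) l1 -> lsum (spat_term n) n l0 ->
  lsum (spat_term (n - 1)) (n - 1) lm ->
  lsum (spat_term_dot n) n (spat_sum_dot n l1 l0 lm).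
Proof.
  intros H1 H0 Hm; apply lsum_pred in H1; apply lsum_succ in Hm.
  pose proof (lsum_telescope _ n (boundary_cv0 Hdec n)) as HB.
  eapply lsum_eq;
    [| |exact (lsum_scal (Copp Ci) _ _ _
                (lsum_add _ _ _ _ _
                   (lsum_add _ _ _ _ _ (lsum_scal (v n) _ _ _ (lsum_add _ _ _ _ _ H1 Hm))
                                       (lsum_scal (Copp c) _ _ _ H0)) HB))].
  - intros j; symmetry; apply spat_term_dot_telescoping.
  - replace (spat_term (n - 1) (n - 1)) with C0 by (unfold spat_term; rewrite kerYO_diag; ring).
    unfold spat_sum_dot; ring.
Qed.

Variables (lam : Cplx) (vt : Z -> Cplx).

Hypothesis Hv : forall n : Z,
  vt n = Cmul (RC (/ 2)) (Cmul (v n) (Csub (PYO m S Sb (n + 1)%Z) (PYO m S Sb n))).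

Definition spatial_eq (a : Z) (l : Cplx) : Prop :=
  Cmul (v a) (shift_sum psi a) = Csub (Cmul lam (psi a)) (Cmul (Cmul Ci (RC (/ 2))) l).

Lemma spatial_eq_dot (n : Z) (l1 l0 lm : Cplx) :
  spatial_eq (n + 1) l1 -> spatial_eq n l0 -> spatial_eq (n - 1) lm ->
  Cadd (Cmul (vt n) (shift_sum psi n)) (Cmul (v n) (shift_sum psit n)) =
  Csub (Cmul lam (psit n)) (Cmul (Cmul Ci (RC (/ 2))) (spat_sum_dot n l1 l0 lm)).
Proof.
  intros E1 E0 Em; unfold spat_sum_dot.
  rewrite Hv, (Cmul_half_Ci_solve _ _ _ E1), (Cmul_half_Ci_solve _ _ _ E0),
    (Cmul_half_Ci_solve _ _ _ Em).
  unfold shift_sum; rewrite !psit_eq.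
  unfold spat_term, boundary, casoratian, spat_lhs, PYO, kerYO, lattice_op, shift_sum.
  replace (n + 1 - 1)%Z with n by ring; replace (n - 1 + 1)%Z with n by ring.
  replace (n + 1 - n - 1)%Z with 0%Z by ring; replace (n - (n - 1) - 1)%Z with 0%Z by ring.
  replace (n - n - 1)%Z with (-1)%Z by ring.
  change (sgnZ 0) with C1; change (sgnZ (-1)) with (Copp C1).
  ring [Ci_sqr RC_half_twice].
Qed.

End YajimaOikawa.

Theorem proposition2p3
  (m : nat) (c lam : Cplx)
  (S Sb St Sbt : Z -> cvec) (v vt psi psit : Z -> Cplx)
  (HS : forall (n : Z) (i : nat), (i < m)%nat ->
     Cmul Ci (St n i) =
     Csub (Cmul (v n) (Cadd (S (n + 1)%Z i) (S (n - 1)%Z i))) (Cmul c (S n i)))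
  (HSb : forall (n : Z) (i : nat), (i < m)%nat ->
     Cmul Ci (Sbt n i) =
     Cadd (Copp (Cmul (v n) (Cadd (Sb (n + 1)%Z i) (Sb (n - 1)%Z i))))
          (Cmul c (Sb n i)))
  (Hv : forall n : Z,
     vt n = Cmul (RC (/ 2))
              (Cmul (v n) (Csub (PYO m S Sb (n + 1)%Z) (PYO m S Sb n))))
  (Hdec1 : left_summable (wYO m S Sb))
  (Hdec2 : left_summable (decayYO m S Sb v psi))
  (Hpsit : forall n : Z,
     Cmul Ci (psit n) =
     Csub (Cmul (v n) (Cadd (psi (n + 1)%Z) (psi (n - 1)%Z))) (Cmul c (psi n)))
  (Hspat : forall n : Z, exists l : Cplx,
     lsum (fun j => Cmul (kerYO m S Sb n j) (Cadd (psi (j + 1)%Z) (psi (j - 1)%Z))) n l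
     /\ Cmul (v n) (Cadd (psi (n + 1)%Z) (psi (n - 1)%Z)) =
        Csub (Cmul lam (psi n)) (Cmul (Cmul Ci (RC (/ 2))) l)) :
  forall n : Z, exists l : Cplx,
    lsum (fun j =>
            Cadd (Cmul (kerYO_dot m S Sb St Sbt n j) (Cadd (psi (j + 1)%Z) (psi (j - 1)%Z)))
                 (Cmul (kerYO m S Sb n j) (Cadd (psit (j + 1)%Z) (psit (j - 1)%Z)))) n l
    /\ Cadd (Cmul (vt n) (Cadd (psi (n + 1)%Z) (psi (n - 1)%Z)))
            (Cmul (v n) (Cadd (psit (n + 1)%Z) (psit (n - 1)%Z))) =
       Csub (Cmul lam (psit n)) (Cmul (Cmul Ci (RC (/ 2))) l).
Proof.
  intros n.
  destruct (Hspat (n + 1)%Z) as [l1 [Hl1 E1]].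
  destruct (Hspat n) as [l0 [Hl0 E0]].
  destruct (Hspat (n - 1)%Z) as [lm [Hlm Em]].
  exists (spat_sum_dot m c S Sb v psi n l1 l0 lm); split.
  - apply (lsum_spat_term_dot m c S Sb St Sbt v psi psit HS HSb Hpsit Hdec2); assumption.
  - apply (spatial_eq_dot m c S Sb v psi psit Hpsit lam vt Hv); assumption.
Qed.
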